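(* Let $f=(f_{\{i,j\}})_{j\ge i\ge-1}$ be any element of the $\mathrm{fin}_2(\mathbb{N})$-simplex, let $X_1,X_2,\dots$ be i.i.d. with $\mathrm{pr}(X_k=\{i,j\}\mid f)=f_{\{i,j\}}$, and let $\mathcal{Y}=\mathcal{E}_{\mathcal{X}}$ be the edge-labeled network induced by the selection function $\mathcal{X}:\mathbb{N}\to\mathrm{fin}_2(\mathbb{Z})$ constructed from $X_1,X_2,\dots$. Then $\mathcal{Y}$ is edge exchangeable.
   Context: $\mathrm{fin}_2(\mathcal{P})$ is the set of size-2 multisets $\{i,j\}$ of $\mathcal{P}$ (undirected edges, loops allowed). An interaction process $\mathcal{I}:S\to\mathrm{fin}_2(\mathcal{P})$ ($S\subseteq\mathbb{N}$) induces the edge-labeled network $\mathcal{E}_{\mathcal{I}}$, the equivalence class of $\mathcal{I}$ under relabeling vertices by bijections of the population, keeping edge labels in $S$. For a permutation $\sigma$ of $S$, $\mathcal{E}^\sigma$ is induced by $\mathcal{I}^\sigma(i)=\mathcal{I}(\sigma^{-1}(i))$; a random edge-labeled network $\mathcal{Y}$ is edge exchangeable if $\mathcal{Y}^\sigma$ has the same law as $\mathcal{Y}$ for all permutations $\sigma$ of $S$. The $\mathrm{fin}_2(\mathbb{N})$-simplex is the set of $(f_{\{i,j\}})_{j\ge i\ge-1}$ (indices in $\{-1,0,1,2,\dots\}$) with $f_{\{i,j\}}\ge0$, $f_{\{-1,i\}}=0$ for all $i\ne0$, and $\sum_{j\ge i\ge-1}f_{\{i,j\}}=1$. Construction of $\mathcal{X}$: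 set $m_0=0$. For $n\ge1$ with $m_{n-1}=z\le0$: if $X_n$ contains neither $0$ nor $-1$, put $\mathcal{X}(n)=X_n$, $m_n=z$; if $X_n=\{0,j\}$ with $j\ge1$, put $\mathcal{X}(n)=\{z-1,j\}$, $m_n=z-1$; if $X_n=\{0,0\}$, put $\mathcal{X}(n)=\{z-1,z-1\}$, $m_n=z-1$; if $X_n=\{-1,0\}$, put $\mathcal{X}(n)=\{z-1,z-2\}$, $m_n=z-2$. (Thus events involving $0$ or $-1$ create fresh vertices that never reappear.) *)

From HB Require Import structures.
From mathcomp Require Import all_boot all_order all_algebra.
From mathcomp Require Import all_classical all_reals all_analysis.
Set Implicit Arguments. Unset Strict Implicit. Unset Printing Implicit Defensive.
Import Order.TTheory GRing.Theory Num.Theory.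
Local Open Scope classical_set_scope.
Local Open Scope ring_scope.

(* A size-2 multiset {i,j} of integers is represented by the ordered pair
   (min i j, max i j).  [mk2 a b] is the multiset {a,b}. *)
Definition mk2 (a b : int) : int * int := (Order.min a b, Order.max a b).

Definition fin2_dom (p : int * int) : Prop := (-1 <= p.1)%R /\ (p.1 <= p.2)%R.

Definition in_fin2_simplex (R : realType) (f : int * int -> R) : Prop :=
  (forall p, fin2_dom p -> 0 <= f p) /\
  (forall i : int, (-1 <= i)%R -> i != 0 -> f (-1, i) = 0) /\
  (\esum_(p in fin2_dom) (f p)%:E = 1%E).

(* Interaction processes with label set S = N (indexed from 0) and
   population Z. *)
Definition iproc := nat -> int * int.

Definition relabel (phi : int -> int) (I : iproc) : iproc :=
  fun n => mk2 (phi (I n).1) (phi (I n).2).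

(* I and J induce the same edge-labeled network: they differ by a
   bijective relabeling of the population (edges compared as multisets). *)
Definition same_network (I J : iproc) : Prop :=
  exists phi : int -> int, bijective phi /\
    forall n, mk2 (phi (I n).1) (phi (I n).2) = mk2 (J n).1 (J n).2.

(* Product sigma-algebra on interaction processes: generated by the
   cylinder sets {I | I n = v}. *)
Definition cylinders : set (set iproc) :=
  [set C | exists n v, C = [set I : iproc | I n = v]].

Definition iproc_measurable (A : set iproc) : Prop := <<s cylinders >> A.

(* Measurable sets of edge-labeled networks = measurable sets of processes
   that are invariant under relabeling (quotient sigma-algebra). *)
Definition network_event (A : set iproc) : Prop :=
  iproc_measurable A /\ forall I J, same_network I J -> (A I <-> A J).

(* One step of the construction of the selection function X-cal:
   given the current value z = m_{n-1} and X_n = x, returns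
   (X-cal(n), m_n). *)
Definition step (z : int) (x : int * int) : (int * int) * int :=
  if (x.1 != 0) && (x.1 != -1) && (x.2 != 0) && (x.2 != -1) then (x, z)
  else if (x.1 == 0) && (1 <= x.2)%R then (mk2 (z - 1) x.2, z - 1)
  else if (x.1 == 0) && (x.2 == 0) then (mk2 (z - 1) (z - 1), z - 1)
  else if (x.1 == -1) && (x.2 == 0) then (mk2 (z - 1) (z - 2), z - 2)
  else (x, z) (* unreachable for values in the support *).

(* m_n, with x k standing for X_{k+1} *)
Fixpoint mstate (x : nat -> int * int) (n : nat) : int :=
  match n with
  | 0 => 0
  | n'.+1 => (step (mstate x n') (x n')).2
  end.

(* calX x n is X-cal(n+1) *)
Definition calX (x : nat -> int * int) : iproc :=
  fun n => (step (mstate x n) (x n)).1.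

Definition mutually_independent d (T : measurableType d) (R : realType)
  (P : probability T R) (X : nat -> T -> int * int) : Prop :=
  forall (s : seq nat) (v : nat -> int * int), uniq s ->
    P (\bigcap_(k in [set` s]) (X k @^-1` [set v k])) =
    (\prod_(k <- s) P (X k @^-1` [set v k]))%E.

(* Write x = (X_1, X_2, ...) and y = x o sinv.  By independence and equal
   marginals, x and y have the same law on cylinder events, a pi-system generating
   the product sigma-algebra, so A(calX y) and A(calX x) have the same probability.
   It remains that, almost surely, calX y and calX x o sinv induce the same network.
   Off the null event where some X_k = {-1, j} with j <> 0, step n either copies
   X_n or creates 1 or 2 fresh negative vertices; sending the fresh vertices of
   step n of x to those of step s n of y, fixing the labels >= 0, and translating
   the negative labels never created (which lie below all created ones) gives the
   required bijective relabeling. *)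

From HB Require Import structures.
From mathcomp Require Import all_boot all_order all_algebra.
From mathcomp Require Import all_classical all_reals all_analysis.
From mathcomp Require Import zify.
Import Order.TTheory GRing.Theory Num.Theory.
Local Open Scope classical_set_scope.
Local Open Scope ring_scope.
Set Implicit Arguments. Unset Strict Implicit.

(* The other values in fin2_dom, {-1, j} with j <> 0, have probability 0. *)
Definition admissible (p : int * int) : bool :=
  [|| (1 <= p.1) && (p.1 <= p.2), (p.1 == 0) && (0 <= p.2) | p == (-1, 0)].

Definition fresh_count (p : int * int) : int :=
  if p.1 == 0 then 1 else if p.1 == -1 then 2 else 0.

Lemma fresh_count_ge0 p : 0 <= fresh_count p.
Proof. by rewrite /fresh_count; case: ifP => //; case: ifP. Qed.

Lemma step_state z p : admissible p -> (step z p).2 = z - fresh_count p.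
Proof.
case: p => a b; rewrite /admissible /fresh_count /step /=.
case/or3P => [/andP[a_ge1 a_le_b]|/andP[/eqP -> b_ge0]|/eqP[-> ->]] //=.
- have -> : (a != 0) && (a != -1) && (b != 0) && (b != -1) by lia.
  have -> : (a == 0) = false by lia.
  have -> : (a == -1) = false by lia.
  by rewrite /= subr0.
- have [->|b_neq0] := eqVneq b 0; first by [].
  by have -> : 1 <= b by lia.
Qed.

Lemma step_edge z p : admissible p -> (step z p).1 =
  if 1 <= p.1 then p
  else if p.1 == 0 then
    (if p.2 == 0 then mk2 (z - 1) (z - 1) else mk2 (z - 1) p.2)
  else mk2 (z - 1) (z - 2).
Proof.
case: p => a b; rewrite /admissible /step /=.
case/or3P => [/andP[a_ge1 a_le_b]|/andP[/eqP -> b_ge0]|/eqP[-> ->]] //=.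
- have -> : (a != 0) && (a != -1) && (b != 0) && (b != -1) by lia.
  by rewrite a_ge1.
- by have [->|b_neq0] := eqVneq b 0; last have -> : 1 <= b by lia.
Qed.

Lemma mk2_map (g : int -> int) a b :
  mk2 (g (mk2 a b).1) (g (mk2 a b).2) = mk2 (g a) (g b).
Proof.
rewrite /mk2; have [//|b_lt_a] := leP a b.
have -> : Order.min (g b) (g a) = Order.min (g a) (g b) by lia.
by have -> : Order.max (g b) (g a) = Order.max (g a) (g b) by lia.
Qed.

Lemma mk2_id a b : mk2 (mk2 a b).1 (mk2 a b).2 = mk2 a b.
Proof. exact: (mk2_map id). Qed.

Section States.
Variable x : nat -> int * int.
Hypothesis x_adm : forall n, admissible (x n).

Lemma mstateS n : mstate x n.+1 = mstate x n - fresh_count (x n).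
Proof. exact: step_state. Qed.

Lemma mstate_nonincr n m : (n <= m)%N -> mstate x m <= mstate x n.
Proof.
move=> /subnK <-; elim: (m - n)%N => [|k IH] //.
by rewrite addSn mstateS; have := fresh_count_ge0 (x (k + n)%N); lia.
Qed.

Lemma mstate_le0 n : mstate x n <= 0.
Proof. exact: (@mstate_nonincr 0). Qed.

(* Step n creates the fresh vertices m_n - 1 - o for 0 <= o < fresh_count (x n). *)
Definition fresh_label (l : int) :=
  exists n (o : int), 0 <= o < fresh_count (x n) /\ l = mstate x n - 1 - o.

Lemma fresh_label_lt0 l : fresh_label l -> l < 0.
Proof. by move=> [n [r [r_bd ->]]]; have := mstate_le0 n; lia. Qed.

Lemma fresh_label_inj n o n' o' :
  0 <= o < fresh_count (x n) -> 0 <= o' < fresh_count (x n') ->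
  mstate x n - 1 - o = mstate x n' - 1 - o' -> n = n' /\ o = o'.
Proof.
have earlier_higher a b oa ob : 0 <= oa < fresh_count (x a) -> 0 <= ob ->
    mstate x a - 1 - oa = mstate x b - 1 - ob -> (a < b)%N -> False.
  move=> oa_bd ob_ge0 e ab; have := @mstate_nonincr a.+1 b ab.
  by rewrite mstateS; lia.
move=> r_bd r'_bd e; case: (ltngtP n n') => [n_lt|n_gt|n_eq].
- by case: (earlier_higher _ _ _ _ r_bd _ e n_lt); lia.
- by case: (earlier_higher _ _ _ _ r'_bd _ (esym e) n_gt); lia.
- by subst n'; split => //; lia.
Qed.

Lemma fresh_labelE l : l < 0 -> fresh_label l <-> exists n, mstate x n <= l.
Proof.
move=> l_lt0; split.
  by move=> [n [r [r_bd ->]]]; exists n.+1; rewrite mstateS; lia.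
move=> [n]; elim: n => [|n IH]; first by rewrite /=; lia.
have [le_n|l_lt] := leP (mstate x n) l; first by move=> _; exact: IH.
move=> le_l; exists n, (mstate x n - 1 - l); split; last lia.
by move: le_l; rewrite mstateS; lia.
Qed.

Definition mstate_bounded := exists L, forall n, L <= mstate x n.

Lemma mstate_min_attained :
  mstate_bounded -> exists N, forall n, mstate x N <= mstate x n.
Proof.
move=> [L L_le]; apply: contrapT => no_min.
have below N : exists n, mstate x n < mstate x N.
  apply: contrapT => not_below; apply: no_min; exists N => n.
  by have [//|lt] := leP (mstate x N) (mstate x n); case: not_below; exists n.
have deep k : exists n, mstate x n <= - (k%:Z).
  elim: k => [|k [n le_n]]; first by exists 0%N.
  by have [n' lt_n'] := below n; exists n'; lia.
by have [n le_n] := deep `|L|.+1; have := L_le n; lia.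
Qed.

Lemma fresh_count_after_min N : (forall n, mstate x N <= mstate x n) ->
  forall n, (N <= n)%N -> fresh_count (x n) = 0.
Proof.
move=> N_min n Nn; have := N_min n.+1; have := mstate_nonincr Nn.
by rewrite mstateS; have := fresh_count_ge0 (x n); lia.
Qed.

Lemma mstate_bounded_fresh_free K :
  (forall n, (K <= n)%N -> fresh_count (x n) = 0) -> mstate_bounded.
Proof.
move=> free; exists (mstate x K) => n; have [//|Kn] := leqP n K.
  exact: mstate_nonincr.
have const j : mstate x (j + K) = mstate x K.
  by elim: j => [//|j IH]; rewrite addSn mstateS IH free ?leq_addl //; lia.
by rewrite -(subnK (ltnW Kn)) const.
Qed.

Lemma unbounded_fresh_label : ~ mstate_bounded -> forall l, l < 0 -> fresh_label l.
Proof.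
move=> unbd l l_lt0; apply/(fresh_labelE l_lt0); apply: contrapT => never.
apply: unbd; exists l => n.
by have [//|lt] := leP l (mstate x n); case: never; exists n; lia.
Qed.

End States.

(* Labels never created exist only when m_n is bounded; they lie below all fresh
   labels and are matched by the translation l |-> l - Lx + Ly. *)
Definition relabel_rel (x y : nat -> int * int) (s : nat -> nat) (Lx Ly l l' : int) :=
  [\/ 0 <= l /\ l' = l,
      exists n (o : int), [/\ 0 <= o < fresh_count (x n), l = mstate x n - 1 - o
                            & l' = mstate y (s n) - 1 - o]
    | [/\ l < 0, ~ fresh_label x l & l' = l - Lx + Ly]].

Definition shift_avoids_fresh (x y : nat -> int * int) (Lx Ly : int) :=
  forall l, l < 0 -> ~ fresh_label x l ->
    l - Lx + Ly < 0 /\ ~ fresh_label y (l - Lx + Ly).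

Lemma relabel_rel_total x y s Lx Ly l : exists l', relabel_rel x y s Lx Ly l l'.
Proof.
have [l_ge0|l_lt0] := leP 0 l; first by exists l; apply: Or31.
have [[n [r [r_bd e]]]|not_fresh] := pselect (fresh_label x l).
  by exists (mstate y (s n) - 1 - r); apply: Or32; exists n, r.
by exists (l - Lx + Ly); apply: Or33.
Qed.

Lemma relabel_rel_functional x y s Lx Ly l a b : (forall n, admissible (x n)) ->
  relabel_rel x y s Lx Ly l a -> relabel_rel x y s Lx Ly l b -> a = b.
Proof.
move=> x_adm.
have fresh_lt0 n r : 0 <= r < fresh_count (x n) -> l = mstate x n - 1 - r -> l < 0.
  by move=> r_bd e; apply: (fresh_label_lt0 x_adm); exists n, r.
case=> [[l_ge0 ->]|[n [r [r_bd e ->]]]|[l_lt0 nf ->]];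
case=> [[l_ge0' ->]|[n' [r' [r'_bd e' ->]]]|[l_lt0' nf' ->]] //.
- by have := fresh_lt0 _ _ r'_bd e'; lia.
- by lia.
- by have := fresh_lt0 _ _ r_bd e; lia.
- by have [<- <-] := fresh_label_inj x_adm r_bd r'_bd (etrans (esym e) e').
- by case: nf'; exists n, r.
- by lia.
- by case: nf; exists n', r'.
Qed.

Lemma relabel_rel_sym x y s t Lx Ly l l' :
  (forall i, y i = x (t i)) -> cancel s t -> shift_avoids_fresh x y Lx Ly ->
  relabel_rel x y s Lx Ly l l' -> relabel_rel y x t Ly Lx l' l.
Proof.
move=> yE st shift.
case=> [[l_ge0 ->]|[n [r [r_bd -> ->]]]|[l_lt0 nf ->]].
- exact: Or31.
- by apply: Or32; exists (s n), r; rewrite yE st.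
- have [l'_lt0 nf'] := shift l l_lt0 nf; apply: Or33; split => //; lia.
Qed.

Lemma relabeling_exists x y s t Lx Ly : (forall n, admissible (x n)) ->
  (forall i, y i = x (t i)) -> cancel s t -> cancel t s ->
  shift_avoids_fresh x y Lx Ly -> shift_avoids_fresh y x Ly Lx ->
  exists phi : int -> int, [/\ bijective phi, forall l, 0 <= l -> phi l = l &
    forall n (o : int), 0 <= o < fresh_count (x n) ->
      phi (mstate x n - 1 - o) = mstate y (s n) - 1 - o].
Proof.
move=> x_adm yE st ts shift_xy shift_yx.
have xE i : x i = y (s i) by rewrite yE st.
have y_adm i : admissible (y i) by rewrite yE.
have [phi phiP] := choice (relabel_rel_total x y s Lx Ly).
have [psi psiP] := choice (relabel_rel_total y x t Ly Lx).
exists phi; split.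
- exists psi => l.
    exact: (relabel_rel_functional y_adm (psiP (phi l))
              (relabel_rel_sym yE st shift_xy (phiP l))).
  exact: (relabel_rel_functional x_adm (phiP (psi l))
            (relabel_rel_sym xE ts shift_yx (psiP l))).
- by move=> l l_ge0; apply: (relabel_rel_functional x_adm (phiP l)); apply: Or31.
- move=> n r r_bd; apply: (relabel_rel_functional x_adm (phiP _)).
  by apply: Or32; exists n, r.
Qed.

Lemma shift_avoids_fresh_min x y Nx Ny :
  (forall n, admissible (x n)) -> (forall n, admissible (y n)) ->
  (forall n, mstate x Nx <= mstate x n) -> (forall n, mstate y Ny <= mstate y n) ->
  shift_avoids_fresh x y (mstate x Nx) (mstate y Ny).
Proof.
move=> x_adm y_adm Nx_min Ny_min l l_lt0 nf.
have l_lt : l < mstate x Nx.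
  rewrite ltNge; apply/negP => le_l; apply: nf.
  by apply/(fresh_labelE x_adm l_lt0); exists Nx.
have := Ny_min 0%N; rewrite /= => Ny_le0.
split; first lia.
by move=> /(fresh_labelE y_adm) [|n]; [lia|have := Ny_min n; lia].
Qed.

Lemma mstate_bounded_perm x y s t : (forall n, admissible (x n)) ->
  (forall i, y i = x (t i)) -> cancel t s -> mstate_bounded x -> mstate_bounded y.
Proof.
move=> x_adm yE ts x_bd.
have [N N_min] := mstate_min_attained x_bd.
pose K := (\max_(k < N) (s k).+1)%N.
have sK k : (k < N)%N -> (s k < K)%N by move=> kN; exact: (leq_bigmax (Ordinal kN)).
have y_adm i : admissible (y i) by rewrite yE.
apply: (mstate_bounded_fresh_free y_adm (K := K)) => i Ki; rewrite yE.
apply: (fresh_count_after_min x_adm N_min); rewrite leqNgt; apply/negP => tiN.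
by have := sK _ tiN; rewrite ts ltnNge Ki.
Qed.

Lemma shift_avoids_fresh_exists x y s t : (forall n, admissible (x n)) ->
  (forall i, y i = x (t i)) -> cancel s t -> cancel t s ->
  exists Lx Ly, shift_avoids_fresh x y Lx Ly /\ shift_avoids_fresh y x Ly Lx.
Proof.
move=> x_adm yE st ts.
have xE i : x i = y (s i) by rewrite yE st.
have y_adm i : admissible (y i) by rewrite yE.
have [x_bd|x_unbd] := pselect (mstate_bounded x).
  have [Nx Nx_min] := mstate_min_attained x_bd.
  have [Ny Ny_min] := mstate_min_attained (mstate_bounded_perm x_adm yE ts x_bd).
  by exists (mstate x Nx), (mstate y Ny); split; exact: shift_avoids_fresh_min.
have y_unbd : ~ mstate_bounded y by move=> /(mstate_bounded_perm y_adm xE st).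
by exists 0, 0; split => l l_lt0 []; exact: unbounded_fresh_label.
Qed.

Lemma calX_perm_same_network x s t : (forall n, admissible (x n)) ->
  cancel s t -> cancel t s -> same_network (calX x \o t) (calX (x \o t)).
Proof.
move=> x_adm st ts; set y := x \o t.
have yE i : y i = x (t i) by [].
have [Lx [Ly [shift_xy shift_yx]]] := shift_avoids_fresh_exists x_adm yE st ts.
have [phi [phi_bij phi_ge0 phi_fresh]] :=
  relabeling_exists x_adm yE st ts shift_xy shift_yx.
exists phi; split => // i /=.
suff edgeE n : mk2 (phi (calX x n).1) (phi (calX x n).2) =
               mk2 (calX y (s n)).1 (calX y (s n)).2 by rewrite edgeE ts.
rewrite /calX (yE (s n)) st !(step_edge _ (x_adm n)).
have phi_n := phi_fresh n; have := x_adm n.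
case: (x n) phi_n => [a b] phi_n; rewrite /admissible /fresh_count /= in phi_n *.
have phi_first : a = 0 \/ a = -1 -> phi (mstate x n - 1) = mstate y (s n) - 1.
  by move=> a01; have := phi_n 0; rewrite !subr0; apply; case: a01 => ->.
case/or3P => [/andP[a_ge1 a_le_b]|/andP[/eqP a0 b_ge0]|/eqP[a_1 b0]].
- by rewrite a_ge1 /= !phi_ge0 //; lia.
- have -> : (1 <= a) = false by lia.
  have phi1 := phi_first (or_introl a0).
  rewrite a0 /=; case: eqVneq => [_|b_neq0];
    by rewrite mk2_map phi1 ?phi_ge0 ?mk2_id //; lia.
- rewrite a_1 b0 /= mk2_map (phi_first (or_intror a_1)).
  have -> : phi (mstate x n - 2) = mstate y (s n) - 2.
    by have := phi_n 1; rewrite a_1 /= -!addrA -!opprD; apply.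
  by rewrite mk2_id.
Qed.

HB.instance Definition _ := isPointed.Build int 0%R.
Definition iproc_mspace := g_sigma_algebraType cylinders.

Lemma measurable_cylinder n v : measurable ([set I : iproc | I n = v] : set iproc_mspace).
Proof. by apply: sub_gen_smallest; exists n, v. Qed.

Lemma measurable_prop_set d (T : measurableType d) (Q : Prop) : measurable [set _ : T | Q].
Proof.
have [q|nq] := pselect Q.
  by rewrite (_ : [set _ | Q] = setT) //; apply/seteqP; split.
by rewrite (_ : [set _ | Q] = set0) //; apply/seteqP; split.
Qed.

Section Fibers.
Context d (T : measurableType d).

Lemma measurable_fiber_comp (A : countType) (B : Type) (U : T -> A) (h : A -> B) :
  (forall a, measurable [set w | U w = a]) -> forall b, measurable [set w | h (U w) = b].
Proof.
move=> U_meas b.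
rewrite (_ : [set w | _] = \bigcup_(a : A) ([set w | U w = a] `&` [set _ | h a = b])).
  apply: countable_bigcupT_measurable => [|a]; first exact: countableP.
  exact: measurableI (U_meas a) (measurable_prop_set _ _).
by apply/seteqP; split => w /=; [move=> e; exists (U w)|move=> [a _ [<-]]].
Qed.

Lemma measurable_fiber_pair (A B : Type) (U : T -> A) (V : T -> B) :
  (forall a, measurable [set w | U w = a]) -> (forall b, measurable [set w | V w = b]) ->
  forall p, measurable [set w | (U w, V w) = p].
Proof.
move=> U_meas V_meas [a b].
rewrite (_ : [set w | _] = [set w | U w = a] `&` [set w | V w = b]).
  exact: measurableI.
by apply/seteqP; split => w /=; case=> -> ->.
Qed.

Variable Y : nat -> T -> int * int.
Hypothesis Y_meas : forall k v, measurable [set w | Y k w = v].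

Lemma measurable_mstate n z : measurable [set w | mstate (fun k => Y k w) n = z].
Proof.
elim: n z => [|n IH] z; first exact: (measurable_prop_set _ (0 = z)).
exact: (measurable_fiber_comp (fun q => (step q.1 q.2).2)
          (measurable_fiber_pair IH (Y_meas n)) z).
Qed.

Lemma measurable_calX n v : measurable [set w | calX (fun k => Y k w) n = v].
Proof.
exact: (measurable_fiber_comp (fun q => (step q.1 q.2).1)
          (measurable_fiber_pair (measurable_mstate n) (Y_meas n)) v).
Qed.

End Fibers.

Lemma measurable_fun_iproc d (T : measurableType d) (Phi : T -> iproc_mspace) :
  (forall n v, measurable [set w | Phi w n = v]) -> measurable_fun setT Phi.
Proof.
move=> Phi_meas; apply: (@measurability _ _ _ _ setT Phi cylinders) => //.
by move=> _ [B [n [v ->]] <-]; rewrite setTI; exact: Phi_meas.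
Qed.

Lemma measurable_fun_calX : measurable_fun setT (calX : iproc_mspace -> iproc_mspace).
Proof.
apply: measurable_fun_iproc => n v.
apply: (@measurable_calX _ iproc_mspace (fun k I => I k)) => k u.
exact: measurable_cylinder.
Qed.

Definition cyl (ks : seq nat) (v : nat -> int * int) : set iproc :=
  [set I | forall k, k \in ks -> I k = v k].

Lemma measurable_cyl ks v : measurable (cyl ks v : set iproc_mspace).
Proof.
elim: ks => [|k ks IH].
  by rewrite (_ : cyl [::] v = setT) //; apply/seteqP; split => // I _ k.
rewrite (_ : cyl (k :: ks) v = [set I | I k = v k] `&` cyl ks v).
  exact: measurableI (measurable_cylinder _ _) IH.
apply/seteqP; split => I.
  by move=> Iv; split => [|j j_in]; apply: Iv; rewrite inE ?eqxx ?j_in ?orbT.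
by move=> [Ik Iv] j; rewrite inE => /orP[/eqP ->|/Iv].
Qed.

Definition cyl_pi : set (set iproc) := [set C | C = set0 \/ exists ks v, C = cyl ks v].

Lemma cyl_pi_setI_closed : setI_closed cyl_pi.
Proof.
move=> A B [->|[ks1 [v1 ->]]]; first by left; rewrite set0I.
move=> [->|[ks2 [v2 ->]]]; first by left; rewrite setI0.
have [[k [k1 k2 v12]]|compat] :=
  pselect (exists k, [/\ k \in ks1, k \in ks2 & v1 k <> v2 k]).
  left; apply/seteqP; split => // I [I1 I2]; apply: v12.
  by rewrite -(I1 _ k1) -(I2 _ k2).
right; exists (ks1 ++ ks2), (fun k => if k \in ks1 then v1 k else v2 k).
apply/seteqP; split => I.
  by move=> [I1 I2] k; rewrite mem_cat; case: ifP => [/I1 //|_ /= /I2].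
move=> I12; split => k k_in; first by have := I12 k; rewrite mem_cat k_in /=; apply.
have := I12 k; rewrite mem_cat k_in orbT; case: ifP => [k1|_]; last by apply.
move=> ->//; apply: contrapT => v12; apply: compat; exists k; split => //.
Qed.

Lemma sigma_cylinders_sub_cyl_pi : measurable `<=` <<s (cyl_pi : set (set iproc_mspace)) >>.
Proof.
apply: smallest_sub; first exact: smallest_sigma_algebra.
move=> C [n [v ->]]; apply: sub_gen_smallest; right; exists [:: n], (fun _ => v).
by apply/seteqP; split => I /=; [move=> In k; rewrite inE => /eqP ->|apply; rewrite inE].
Qed.

Section PermutedLaw.
Context d (T : measurableType d) (R : realType) (P : probability T R).
Variable X : nat -> T -> int * int.
Hypothesis X_meas : forall k v, measurable [set w | X k w = v].
Hypothesis X_ident : forall k v, P (X k @^-1` [set v]) = P (X 0 @^-1` [set v]).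
Hypothesis X_indep : mutually_independent P X.
Variables s sinv : nat -> nat.
Hypothesis sinvK : cancel sinv s.

Definition Xseq (w : T) : iproc_mspace := fun k => X k w.
Definition Xseq_perm (w : T) : iproc_mspace := fun k => X (sinv k) w.

Lemma measurable_Xseq : measurable_fun setT Xseq.
Proof. exact: measurable_fun_iproc. Qed.

Lemma measurable_Xseq_perm : measurable_fun setT Xseq_perm.
Proof. by apply: measurable_fun_iproc => n; exact: X_meas. Qed.

HB.instance Definition _ := isMeasurableFun.Build _ _ _ _ Xseq measurable_Xseq.
HB.instance Definition _ := isMeasurableFun.Build _ _ _ _ Xseq_perm measurable_Xseq_perm.

Lemma cyl_law ks v : P (Xseq @^-1` cyl ks v) = P (Xseq_perm @^-1` cyl ks v).
Proof.
have undupE (g : T -> iproc_mspace) : g @^-1` cyl ks v = g @^-1` cyl (undup ks) v.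
  by apply/seteqP; split => w gv k; [rewrite mem_undup|rewrite -mem_undup]; apply: gv.
rewrite !undupE; have := undup_uniq ks; set q := undup ks => q_uniq.
have -> : Xseq @^-1` cyl q v = \bigcap_(k in [set` q]) (X k @^-1` [set v k]) by [].
have -> : Xseq_perm @^-1` cyl q v =
    \bigcap_(j in [set` map sinv q]) (X j @^-1` [set (v \o s) j]).
  apply/seteqP; split => w vw.
    by move=> j /= /mapP[k kq ->]; rewrite sinvK; exact: vw.
  by move=> k kq; have := vw (sinv k); rewrite /= sinvK; apply; apply: map_f.
rewrite !X_indep ?map_inj_uniq //; last exact: can_inj sinvK.
by rewrite big_map; apply: eq_bigr => k _ /=; rewrite sinvK X_ident [RHS]X_ident.
Qed.

Lemma Xseq_perm_law (B : set iproc_mspace) : measurable B ->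
  P (Xseq @^-1` B) = P (Xseq_perm @^-1` B).
Proof.
move=> B_meas; change (distribution P Xseq B = distribution P Xseq_perm B).
apply: (@g_sigma_algebra_measure_unique _ _ iproc_mspace cyl_pi _ (fun=> setT)).
- by move=> C [->|[ks [v ->]]]; [exact: measurable0|exact: measurable_cyl].
- move=> _; right; exists [::], (fun=> (0, 0)).
  by apply/seteqP; split => // I _ k.
- by rewrite bigcup_const.
- exact: cyl_pi_setI_closed.
- move=> C [->|[ks [v ->]]]; last exact: cyl_law.
  by rewrite !measure0.
- by move=> _; rewrite /= probability_setT ltry.
- exact: sigma_cylinders_sub_cyl_pi.
Qed.

End PermutedLaw.

Lemma identically_distributed d (T : measurableType d) (R : realType)
    (P : probability T R) (V : Type) (D : set V) (g : V -> R) (X : nat -> T -> V) :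
  (forall k w, D (X k w)) -> (forall k p, D p -> P (X k @^-1` [set p]) = (g p)%:E) ->
  forall k p, P (X k @^-1` [set p]) = P (X 0 @^-1` [set p]).
Proof.
move=> X_dom X_law k p; have [Dp|nDp] := pselect (D p); first by rewrite !X_law.
have outside j : X j @^-1` [set p] = set0.
  by apply/seteqP; split => // w /= Xjw; apply: nDp; rewrite -Xjw.
by rewrite !outside.
Qed.

Lemma negligible_countable_bigcup d (T : measurableType d) (R : realType)
    (mu : {measure set T -> \bar R}) (I : countType) (F : I -> set T) :
  (forall i, mu.-negligible (F i)) -> mu.-negligible (\bigcup_i F i).
Proof.
move=> F_null; apply: (@negligibleS _ _ _ _ (\bigcup_m oapp F set0 (unpickle m))).
  by move=> w [i _ Fiw]; exists (pickle i) => //=; rewrite pickleK.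
apply: negligible_bigcup => m.
by case: (unpickle m) => [i|] /=; [exact: F_null|exact: negligible_set0].
Qed.

Lemma measure_eq_ae d (T : measurableType d) (R : realType)
    (mu : {measure set T -> \bar R}) (A B : set T) :
  measurable A -> measurable B -> {ae mu, forall w, A w <-> B w} -> mu A = mu B.
Proof.
move=> A_meas B_meas [N [N_meas N0 AB_N]].
have offN C : measurable C -> mu C = mu (C `\` N).
  move=> C_meas; rewrite (measureDI mu C_meas N_meas).
  by rewrite (@subset_measure0 _ _ _ mu (C `&` N) N) ?adde0 //; exact: measurableI.
rewrite (offN _ A_meas) (offN _ B_meas); congr (mu _).
have AB w : ~ N w -> A w <-> B w.
  by move=> Nw; apply: contrapT => nAB; apply: Nw; apply: AB_N.
by apply/seteqP; split => w [Cw Nw]; split => //; apply/(AB w Nw).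
Qed.

Lemma admissible_ae (R : realType) (f : int * int -> R) (hf : in_fin2_simplex f)
    d (T : measurableType d) (P : probability T R) (X : nat -> T -> int * int) :
  (forall k v, measurable (X k @^-1` [set v])) -> (forall k w, fin2_dom (X k w)) ->
  (forall k p, fin2_dom p -> P (X k @^-1` [set p]) = (f p)%:E) ->
  {ae P, forall w, forall n, admissible (X n w)}.
Proof.
move=> X_meas X_dom X_law.
have null q : P.-negligible [set w | X q.1 w = q.2 /\ ~~ admissible q.2].
  case: q => n p /=; have [adm|nadm] := boolP (admissible p).
    rewrite (_ : [set _ | _] = set0); first exact: negligible_set0.
    by apply/seteqP; split => // w [].
  exists (X n @^-1` [set p]); split; [exact: X_meas| |by move=> w []].
  have [dom|ndom] := pselect (fin2_dom p); last first.
    rewrite (_ : _ @^-1` _ = set0) ?measure0 //.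
    by apply/seteqP; split => // w /= Xnw; apply: ndom; rewrite -Xnw.
  rewrite X_law //; case: p nadm dom => a b.
  rewrite /admissible /fin2_dom /= => nadm [a_ge b_ge].
  have a_1 : a = -1 by lia.
  have b_neq0 : b != 0 by apply: contraNneq nadm => b0; rewrite a_1 b0.
  by rewrite a_1 hf.2.1 //; lia.
apply: negligibleS (negligible_countable_bigcup null) => w /= not_adm.
have [n nadm] : exists n, ~~ admissible (X n w).
  apply: contrapT => no_bad; apply: not_adm => n.
  by case: (boolP (admissible (X n w))) => // bad; case: no_bad; exists n.
by exists (n, X n w).
Qed.

Unset Implicit Arguments. Set Strict Implicit.

Theorem propositionA1 (R : realType) (f : int * int -> R)
  (hf : in_fin2_simplex f)
  (d : measure_display) (T : measurableType d) (P : probability T R)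
  (X : nat -> T -> int * int)
  (hXmeas : forall k v, measurable (X k @^-1` [set v]))
  (hXdom : forall k w, fin2_dom (X k w))
  (hXlaw : forall k p, fin2_dom p -> P (X k @^-1` [set p]) = (f p)%:E)
  (hXind : mutually_independent P X) :
  forall (s sinv : nat -> nat), cancel s sinv -> cancel sinv s ->
  forall A : set iproc, network_event A ->
    P [set w | A (fun i => calX (fun k => X k w) (sinv i))] =
    P [set w | A (calX (fun k => X k w))].
Proof.
move=> s sinv sK sinvK A [A_meas A_inv].
have X_ident := identically_distributed hXdom hXlaw.
pose B : set iproc_mspace := calX @^-1` A.
have B_meas : measurable B by rewrite -[B]setTI; exact: measurable_fun_calX.
rewrite -[RHS]/(P (Xseq X @^-1` B)) (Xseq_perm_law hXmeas X_ident hXind sinvK B_meas).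
apply: measure_eq_ae.
- have perm_meas : measurable_fun setT (fun w => calX (Xseq X w) \o sinv : iproc_mspace).
    by apply: measurable_fun_iproc => n v; exact: measurable_calX.
  by rewrite -[X in measurable X]setTI; exact: perm_meas.
- by rewrite -[X in measurable X]setTI; exact: measurable_Xseq_perm.
- apply: filterS (admissible_ae hf hXmeas hXdom hXlaw) => w w_adm.
  exact: A_inv (calX_perm_same_network w_adm sK sinvK).
Qed.
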